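(* Let $T=((\Omega,\mathcal{A}),\{(\Omega,\mathcal{M}_i)\}_{i\in N},\{t_i\}_{i\in N})$ be a type space, $I\subseteq N$, and $S\subseteq\Omega$ an $I$-common certainty component. Let $\mathcal{A}^S=\{F\cap S:F\in\mathcal{A}\}$, $\mathcal{M}_i^S=\{F\cap S:F\in\mathcal{M}_i\}$ for $i\in I$, and for $\omega\in S$, $i\in I$ let $t_i^S(\omega,\cdot)$ be the restriction of $t_i(\omega,\cdot)$ to $(S,\mathcal{A}^S)$, i.e. $t_i^S(\omega,F\cap S)=t_i(\omega,F)$ for $F\in\mathcal{A}$. Then $t_i^S$ is well defined and $((S,\mathcal{A}^S),\{(S,\mathcal{M}_i^S)\}_{i\in I},\{t_i^S\}_{i\in I})$ is a type space.
   Context: A field on a set $X$ is a collection of subsets of $X$ containing $X$ and closed under complements and finite intersections. For a field $\mathcal{A}$ on $\Omega$, $\mathrm{pba}(\Omega,\mathcal{A})$ is the set of finitely additive nonnegative $P:\mathcal{A}\to\mathbb{R}$ with $P(\Omega)=1$; $B(\Omega,\mathcal{A})$ the sup-norm closure of the linear span of indicators of sets in $\mathcal{A}$. A type space is $((\Omega,\mathcal{A}),\{(\Omega,\mathcal{M}_i)\}_{i\in N},\{t_i\}_{i\in N})$ with $N$ a nonempty set of players, fields $\mathcal{M}_i\subseteq\mathcal{A}$ on a set $\Omega$, and $t_i:\Omega\times\mathcal{A}\to[0,1]$ with: $t_i(\omega,\cdot)\in\mathrm{pba}(\Omega,\mathcal{A})$ for all $\omega$; $t_i(\cdot,E)\in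 B(\Omega,\mathcal{M}_i)$ for all $E\in\mathcal{A}$; $t_i(\omega,E)=1$ whenever $E\in\mathcal{M}_i$, $\omega\in E$. For $I\subseteq N$, a nonempty $S\subseteq\Omega$ (not necessarily in $\mathcal{A}$) is an $I$-common certainty component if there exists $E\in\mathcal{A}$ with $E\subseteq S$ and $t_i(\omega,E)=1$ for all $\omega\in S$, $i\in I$. *)

From mathcomp Require Import all_boot all_order all_algebra.
From mathcomp Require Import boolp classical_sets reals.
Set Implicit Arguments. Unset Strict Implicit. Unset Printing Implicit Defensive.
Import Order.TTheory GRing.Theory Num.Theory.
Local Open Scope classical_set_scope.
Local Open Scope ring_scope.

Definition is_field (X : Type) (F : set (set X)) : Prop :=
  [/\ F setT,
      (forall E, F E -> F (~` E)) &
      (forall E G, F E -> F G -> F (E `&` G))].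

Definition pba (R : realType) (X : Type) (F : set (set X)) (p : set X -> R) : Prop :=
  [/\ (forall E, F E -> 0 <= p E),
      (forall E G, F E -> F G -> E `&` G = set0 -> p (E `|` G) = p E + p G) &
      p setT = 1].

Definition indic_fun (R : realType) (X : Type) (E : set X) (x : X) : R :=
  if `[< E x >] then 1 else 0.

Definition simple_span (R : realType) (X : Type) (F : set (set X)) (g : X -> R) : Prop :=
  exists (n : nat) (c : 'I_n -> R) (E : 'I_n -> set X),
    (forall k, F (E k)) /\ (forall x, g x = \sum_(k < n) c k * @indic_fun R X (E k) x).

Definition in_B (R : realType) (X : Type) (F : set (set X)) (f : X -> R) : Prop :=
  forall eps : R, 0 < eps ->
    exists g, simple_span F g /\ (forall x, `|f x - g x| <= eps).

(* Type space with state space the whole type Om, players N : set P,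
   field A, fields M i (i in N), types t i : Om -> set Om -> R
   (only values on sets of A matter). *)
Definition type_space (R : realType) (Om P : Type) (N : set P)
    (A : set (set Om)) (M : P -> set (set Om)) (t : P -> Om -> set Om -> R) : Prop :=
  (exists i, N i) /\
  is_field A /\
  (forall i, N i -> is_field (M i) /\ M i `<=` A) /\
  (forall i, N i -> forall w, pba A (t i w)) /\
  (forall i, N i -> forall w E, A E -> 0 <= t i w E <= 1) /\
  (forall i, N i -> forall E, A E -> in_B (M i) (fun w => t i w E)) /\
  (forall i, N i -> forall E w, M i E -> E w -> t i w E = 1).

Definition common_certainty_component (R : realType) (Om P : Type)
    (A : set (set Om)) (t : P -> Om -> set Om -> R) (I : set P) (S : set Om) : Prop :=
  (exists w, S w) /\
  exists E, [/\ A E, E `<=` S & forall w, S w -> forall i, I i -> t i w E = 1].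

Definition trace_on (Om : Type) (F : set (set Om)) (S : set Om) : set (set {w : Om | S w}) :=
  [set G | exists2 E, F E & G = (@proj1_sig Om S) @^-1` E].

From mathcomp Require Import all_boot all_order all_algebra.
From mathcomp Require Import boolp classical_sets reals.
From mathcomp Require Import lra.
Set Implicit Arguments. Unset Strict Implicit. Unset Printing Implicit Defensive.
Import Order.TTheory GRing.Theory Num.Theory.
Local Open Scope classical_set_scope.
Local Open Scope ring_scope.

(* For w in S, t_i(w, .) is a finitely additive probability giving mass 1 to
   the set E inside S, hence mass 0 to its complement; so t_i(w, F) only
   depends on F `&` E, and a fortiori on F `&` S, which makes the restriction
   well defined.  Each type-space axiom is then inherited through the trace
   map F |-> F `&` S: traces of a field form a field, disjoint traces come
   from disjoint sets of the field, and simple approximants restrict to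
   simple approximants. *)

Section FieldTheory.
Variables (X : Type) (A : set (set X)).
Hypothesis fieldA : is_field A.

Lemma is_field_setU E G : A E -> A G -> A (E `|` G).
Proof.
move=> AE AG; have [_ A_setC A_setI] := fieldA.
by rewrite -[E `|` G]setCK setCU; apply: (A_setC); apply: (A_setI); apply: (A_setC).
Qed.

Lemma is_field_setD E G : A E -> A G -> A (E `&` ~` G).
Proof.
move=> AE AG; have [_ A_setC A_setI] := fieldA.
by apply: (A_setI) => //; apply: (A_setC).
Qed.

Lemma is_field_trace (S : set X) : is_field (@trace_on _ A S).
Proof.
have [A_setT A_setC A_setI] := fieldA; split; first by exists setT.
- by move=> _ [E AE ->]; exists (~` E); [apply: (A_setC)|].
- by move=> _ _ [E AE ->] [G AG ->]; exists (E `&` G); [apply: (A_setI)|].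
Qed.

Section Pba.
Variables (R : realType) (p : set X -> R).
Hypothesis pbap : pba A p.

Lemma pba_splitI F Y : A F -> A Y -> p F = p (F `&` Y) + p (F `&` ~` Y).
Proof.
move=> AF AY; have [_ _ A_setI] := fieldA; have [_ padd _] := pbap.
rewrite -padd; first by rewrite -setIUr setUCr setIT.
- exact: A_setI.
- exact: is_field_setD.
- by rewrite setIACA setICr setI0.
Qed.

Lemma pba_le F G : A F -> A G -> F `<=` G -> p F <= p G.
Proof.
move=> AF AG FG; have [p0 _ _] := pbap.
rewrite (pba_splitI AG AF) (setIidr FG) lerDl p0 //.
exact: is_field_setD.
Qed.

Lemma pba_setI_certain E F : A E -> p E = 1 -> A F -> p (F `&` E) = p F.
Proof.
move=> AE pE1 AF; have [A_setT A_setC _] := fieldA; have [p0 _ p1] := pbap.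
have pCE : p (~` E) = 0.
  by have := pba_splitI A_setT AE; rewrite !setTI p1 pE1; lra.
have pFCE : p (F `&` ~` E) = 0.
  have AFCE : A (F `&` ~` E) by exact: is_field_setD.
  apply/eqP; rewrite eq_le p0 // andbT -pCE pba_le //.
  exact: A_setC.
by rewrite (pba_splitI AF AE) pFCE addr0.
Qed.

Lemma pba_eq_on_certain (S E F G : set X) : A E -> E `<=` S -> p E = 1 ->
  A F -> A G -> F `&` S = G `&` S -> p F = p G.
Proof.
move=> AE ES pE1 AF AG FSGS.
rewrite -(pba_setI_certain AE pE1 AF) -(pba_setI_certain AE pE1 AG).
by rewrite -(setIidr ES) !setIA FSGS.
Qed.

End Pba.
End FieldTheory.

Section Trace.
Variables (Om : Type) (S : set Om).

Local Notation tr F := ((@proj1_sig Om S) @^-1` F).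

Lemma preimage_sval_setI (F G : set Om) : tr F = tr G -> F `&` S = G `&` S.
Proof.
move=> trFG; apply/seteqP; split=> x [Fx Sx]; split=> //.
- by have : tr G (exist _ x Sx) by rewrite -trFG.
- by have : tr F (exist _ x Sx) by rewrite trFG.
Qed.

Lemma trace_sub (F G : set (set Om)) : F `<=` G -> @trace_on _ F S `<=` @trace_on _ G S.
Proof. by move=> FG _ [E FE ->]; exists E => //; apply: FG. Qed.

Variable R : realType.

(* Evaluates p at some representative F of a trace H; the value 0 on
   non-traces is junk. *)
Definition trace_setfun (A : set (set Om)) (p : set Om -> R) (H : set {w | S w}) : R :=
  match pselect (exists2 F, A F & H = tr F) with
  | left ex => p (projT1 (cid2 ex))
  | right _ => 0
  end.

Lemma trace_setfunE (A : set (set Om)) (p : set Om -> R) F :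
  (forall F G, A F -> A G -> F `&` S = G `&` S -> p F = p G) ->
  A F -> trace_setfun A p (tr F) = p F.
Proof.
move=> p_wd AF; rewrite /trace_setfun; case: pselect => [ex|[]]; last by exists F.
case: cid2 => G AG trFG /=; apply: (p_wd) => //.
exact: preimage_sval_setI.
Qed.

Lemma pba_trace (A : set (set Om)) (p : set Om -> R) (q : set {w | S w} -> R) :
  is_field A -> pba A p -> (forall F, A F -> q (tr F) = p F) ->
  pba (@trace_on _ A S) q.
Proof.
move=> fieldA [p0 padd p1] qE; split.
- by move=> _ [F AF ->]; rewrite qE // p0.
- move=> _ _ [F AF ->] [G AG ->] disj.
  have trGD : tr G = tr (G `&` ~` F).
    apply/seteqP; split=> [w Gw|w []//]; split=> // Fw.
    by have : (tr F `&` tr G) w by []; rewrite disj.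
  have AGD : A (G `&` ~` F) by exact: is_field_setD.
  rewrite trGD -preimage_setU !qE //; last exact: is_field_setU.
  by rewrite padd // setICA setICr setI0.
- by rewrite -(preimage_setT (@proj1_sig Om S)) qE; [exact: p1|case: fieldA].
Qed.

Lemma in_B_trace (F : set (set Om)) (f : Om -> R) (g : {w | S w} -> R) :
  (forall w, g w = f (proj1_sig w)) -> in_B F f -> in_B (@trace_on _ F S) g.
Proof.
move=> gE Bf eps eps0; have [h [[n [c [E [FE hE]]]] fh]] := Bf eps eps0.
exists (h \o @proj1_sig Om S); split; last by move=> w /=; rewrite gE.
exists n, c, (fun k => tr (E k)); split=> [k|w]; first by exists (E k).
by rewrite /= hE.
Qed.

End Trace.

Theorem proposition2 (R : realType) (Om P : Type) (N : set P)
    (A : set (set Om)) (M : P -> set (set Om)) (t : P -> Om -> set Om -> R)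
    (I : set P) (S : set Om) :
  type_space N A M t ->
  I `<=` N -> (exists i, I i) ->
  common_certainty_component A t I S ->
  (* t_i^S is well defined *)
  (forall i, I i -> forall w, S w -> forall F G, A F -> A G ->
     F `&` S = G `&` S -> t i w F = t i w G) /\
  (exists tS : P -> {w : Om | S w} -> set {w : Om | S w} -> R,
     forall i, I i -> forall w F, A F ->
       tS i w ((@proj1_sig Om S) @^-1` F) = t i (proj1_sig w) F) /\
  (* the restricted structure is a type space *)
  (forall tS : P -> {w : Om | S w} -> set {w : Om | S w} -> R,
     (forall i, I i -> forall w F, A F ->
        tS i w ((@proj1_sig Om S) @^-1` F) = t i (proj1_sig w) F) ->
     @type_space R {w : Om | S w} P I (@trace_on Om A S) (fun i => @trace_on Om (M i) S) tS).
Proof.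
move=> [_ [fieldA [fieldM [pbat [t01 [Bt certt]]]]]] IN exI [_ [E [AE ES tE1]]].
have t_wd i : I i -> forall w, S w -> forall F G, A F -> A G ->
    F `&` S = G `&` S -> t i w F = t i w G.
  move=> Ii w Sw F G.
  by apply: (pba_eq_on_certain fieldA (pbat i (IN i Ii) w) AE ES (tE1 w Sw i Ii)).
split=> //; split.
  exists (fun i w => trace_setfun A (t i (proj1_sig w))) => i Ii w F AF.
  by rewrite trace_setfunE //; apply: t_wd (proj2_sig w).
move=> tS tSE; split=> //; split; first exact: is_field_trace.
split.
  move=> i /IN /fieldM [fieldMi MiA].
  by split; [exact: is_field_trace | exact: trace_sub].
split.
  by move=> i Ii w; apply: pba_trace (pbat i (IN i Ii) _) _ => // F; apply: tSE.
split.
  by move=> i Ii w _ [F AF ->]; rewrite tSE //; apply: (t01) => //; apply: IN.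
split.
  move=> i Ii _ [F AF ->].
  by apply: in_B_trace (Bt i (IN i Ii) F AF) => w; rewrite tSE.
move=> i Ii _ w [F MiF ->] Fw; have [_ MiA] := fieldM i (IN i Ii).
rewrite tSE //; last exact: MiA _ MiF.
by apply: (certt) => //; apply: IN.
Qed.
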